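(* Let $N\in\mathbb N$. The set $$R_J(N)=\{f\in R(N): \exists a\in\mathbb R_{>0},\ \exists b,c\in\mathbb R \text{ such that } \operatorname{supp}(f)\subseteq\{(n,r)\in\mathbb R^2: n\ge ar^2+br+c\}\}$$ is a ring (a subring of $R(N)$).
   Context: $R(N)=\mathbb C[\zeta^{1/N},\zeta^{-1/N}]((q^{1/N}))$ denotes the ring of formal Laurent–Puiseux series $f=\sum_{n,r\in\frac1N\mathbb Z}c(n,r)q^n\zeta^r$ in which, for each $n$, only finitely many $r$ have $c(n,r)\neq0$, and $n$ is bounded below on the set of $(n,r)$ with $c(n,r)\ne 0$; multiplication is the usual multiplication of formal series. The support is $\operatorname{supp}(f)=\{(n,r)\in(\frac1N\mathbb Z)^2: c(n,r)\neq 0\}$. *)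

From HB Require Import structures.
From mathcomp Require Import all_boot all_order all_algebra.
From mathcomp Require Import all_classical all_reals.
From mathcomp Require Import complex.
Set Implicit Arguments. Unset Strict Implicit. Unset Printing Implicit Defensive.
Import Order.TTheory GRing.Theory Num.Theory.
Local Open Scope ring_scope.
Local Open Scope classical_set_scope.

(* A formal series f = sum c(n,r) q^n zeta^r with n, r in (1/N)Z is encoded by
   its coefficient function: (i, j) : int * int  |->  c(i/N, j/N) in C = R[i]. *)
Definition series (R : realType) := int * int -> R[i].

Definition supp (R : realType) (f : series R) : set (int * int) :=
  [set ij | f ij != 0].

Definition in_RN (R : realType) (f : series R) : Prop :=
  (forall i : int, finite_set [set j : int | f (i, j) != 0]) /\
  (exists m : int, forall ij, ij \in supp f -> m <= ij.1).

Definition s_zero (R : realType) : series R := fun _ => 0.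
Definition s_one (R : realType) : series R :=
  fun ij => if ij == (0%Z, 0%Z) then 1 else 0.
Definition s_add (R : realType) (f g : series R) : series R :=
  fun ij => f ij + g ij.
Definition s_opp (R : realType) (f : series R) : series R :=
  fun ij => - f ij.
(* Cauchy product; for f, g in R(N) the sum has finite support. *)
Definition s_mul (R : realType) (f g : series R) : series R :=
  fun ij => \sum_(kl \in [set: int * int])
              f kl * g (ij.1 - kl.1, ij.2 - kl.2)%R.

Definition in_RJN (R : realType) (N : nat) (f : series R) : Prop :=
  in_RN f /\
  exists a b c : R, 0 < a /\
    forall ij, ij \in supp f ->
      let n := (ij.1)%:~R / N%:R in
      let r := (ij.2)%:~R / N%:R in
      a * r ^+ 2 + b * r + c <= n.

From HB Require Import structures.
From mathcomp Require Import all_boot all_order all_algebra.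
From mathcomp Require Import all_classical all_reals.
From mathcomp Require Import complex.
From mathcomp Require Import ring lra zify.
Import Order.TTheory GRing.Theory Num.Theory.
Local Open Scope ring_scope.
Local Open Scope classical_set_scope.
Set Implicit Arguments. Unset Strict Implicit. Unset Printing Implicit Defensive.

(* Completing the square, a r^2 + b r + c >= (a/2) r^2 + (c - b^2/(2a)), so a
   series lies in R_J(N) iff its support lies in a centred region
   n >= a r^2 + c with a > 0; such a region already forces finitely many r per n
   and n bounded below, so the R(N) conditions come for free.  Centred regions
   are stable under union (take the minima of a and c), which handles sums, and
   under Minkowski sum with a halved, since (r1 + r2)^2 <= 2 (r1^2 + r2^2),
   which handles Cauchy products. *)

Lemma finite_int_ball (K : nat) : finite_set [set j : int | `|j| < K%:Z].
Proof.
apply: sub_finite_set (finite_image (fun k : nat => k%:Z - K%:Z) (finite_II (2 * K))).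
by move=> j /= ltjK; exists (absz (j + K%:Z)); lia.
Qed.

Lemma sqr_completion (F : realFieldType) (a b c r : F) : 0 < a ->
  a / 2 * r ^+ 2 + (c - b ^+ 2 / (2 * a)) <= a * r ^+ 2 + b * r + c.
Proof.
move=> a_gt0; rewrite -subr_ge0.
have -> : a * r ^+ 2 + b * r + c - (a / 2 * r ^+ 2 + (c - b ^+ 2 / (2 * a)))
        = (a * r + b) ^+ 2 / (2 * a) by field; rewrite gt_eqF.
by rewrite divr_ge0 ?sqr_ge0 // mulr_ge0 // ltW.
Qed.

Lemma sqrD_le (F : realFieldType) (x y : F) : (x + y) ^+ 2 <= 2 * (x ^+ 2 + y ^+ 2).
Proof. have := sqr_ge0 (x - y); nra. Qed.

Definition sum_set (S T : set (int * int)) : set (int * int) :=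
  [set ij | exists2 kl, S kl & T (ij.1 - kl.1, ij.2 - kl.2)%R].

Section Support.
Variables (R : realType) (f g : series R).

Lemma supp_s_zero : supp (s_zero R) = set0.
Proof. by apply/seteqP; split=> ij; rewrite /supp /s_zero /= ?eqxx. Qed.

Lemma supp_s_one : supp (s_one R) = [set (0, 0)%R].
Proof.
apply/seteqP; split=> ij; rewrite /supp /s_one /=.
  by case: ifP => [/eqP ->|_]; rewrite ?eqxx.
by move=> ->; rewrite eqxx oner_eq0.
Qed.

Lemma supp_s_opp : supp (s_opp f) = supp f.
Proof. by apply/seteqP; split=> ij; rewrite /supp /s_opp /= oppr_eq0. Qed.

Lemma supp_s_add : supp (s_add f g) `<=` supp f `|` supp g.
Proof.
move=> ij; rewrite /supp /s_add /=.
by have [->|] := eqVneq (f ij) 0; [rewrite add0r; right | left].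
Qed.

Lemma supp_s_mul : supp (s_mul f g) `<=` sum_set (supp f) (supp g).
Proof.
move=> [i j]; rewrite /supp /= => fg_ij; apply: contrapT => no_kl; move: fg_ij.
rewrite /s_mul fsbig1 ?eqxx // => -[k l] _ /=.
have [->|fkl] := eqVneq (f (k, l)) 0; first by rewrite mul0r.
have [->|gkl] := eqVneq (g (i - k, j - l)%R) 0; first by rewrite mulr0.
by exfalso; apply: no_kl; exists (k, l).
Qed.

End Support.

Section Parabolic.
Variables (R : realType) (N : nat).
Hypothesis N_gt0 : (0 < N)%N.

Definition coord (i : int) : R := i%:~R / N%:R.

Definition parabolic (S : set (int * int)) (a c : R) :=
  forall ij, S ij -> a * coord ij.2 ^+ 2 + c <= coord ij.1.

Lemma coordD (i j : int) : coord (i + j) = coord i + coord j.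
Proof. by rewrite /coord intrD mulrDl. Qed.

Lemma sub_parabolic (S T : set (int * int)) (a c : R) :
  S `<=` T -> parabolic T a c -> parabolic S a c.
Proof. by move=> ST hT ij /ST /hT. Qed.

Lemma parabolic_le (S : set (int * int)) (a a' c c' : R) :
  a' <= a -> c' <= c -> parabolic S a c -> parabolic S a' c'.
Proof.
move=> le_a le_c hS ij /hS; apply: le_trans.
by rewrite lerD // ler_wpM2r ?sqr_ge0.
Qed.

Lemma parabolic_setU (S T : set (int * int)) (a1 c1 a2 c2 : R) :
  parabolic S a1 c1 -> parabolic T a2 c2 ->
  parabolic (S `|` T) (Num.min a1 a2) (Num.min c1 c2).
Proof.
move=> hS hT ij [/hS|/hT]; apply: le_trans; apply: lerD;
  by rewrite ?ler_wpM2r ?sqr_ge0 // ge_min lexx ?orbT.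
Qed.

Lemma parabolic_sum_set (S T : set (int * int)) (a c1 c2 : R) : 0 <= a ->
  parabolic S a c1 -> parabolic T a c2 ->
  parabolic (sum_set S T) (a / 2) (c1 + c2).
Proof.
move=> a_ge0 hS hT [i j] [[k l] /hS /= Skl /hT /= Tkl].
have split_coord u v : coord u = coord (u - v) + coord v by rewrite -coordD subrK.
rewrite /= (split_coord i k) (split_coord j l).
have := sqrD_le (coord (j - l)) (coord l).
move: Skl Tkl; set x := coord (j - l); set y := coord l => Skl Tkl le_sqr.
have : a * (x + y) ^+ 2 <= a * (2 * (x ^+ 2 + y ^+ 2)) by rewrite ler_wpM2l.
lra.
Qed.

Lemma N_gt0R : (0 : R) < N%:R. Proof. by rewrite ltr0n. Qed.

Lemma parabolic_row_finite (S : set (int * int)) (a c : R) : 0 < a ->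
  parabolic S a c -> forall i, finite_set [set j | S (i, j)].
Proof.
move=> a_gt0 hS i; set M := 1 + `|(coord i - c) / a|.
apply: sub_finite_set (finite_int_ball (Num.bound (N%:R * M))) => j /hS /=.
set r := coord j => Sij.
have le_r : `|r| <= M.
  have le_r2 : r ^+ 2 <= `|(coord i - c) / a|.
    apply: le_trans (ler_norm _); rewrite ler_pdivlMr //; lra.
  have := normr_ge0 r; rewrite -[r ^+ 2]real_normK ?num_real // in le_r2.
  have := sqr_ge0 (`|r| - 1); rewrite /M; nra.
have j_eq : j%:~R = N%:R * r :> R by rewrite /r /coord mulrCA divff ?mulr1 // gt_eqF ?N_gt0R.
rewrite -(ltr_int R) intr_norm j_eq normrM ger0_norm ?ler0n //.
apply: le_lt_trans (archi_boundP _); last by rewrite mulr_ge0 // addr_ge0.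
by rewrite ler_pM2l ?N_gt0R.
Qed.

Lemma parabolic_bounded_below (S : set (int * int)) (a c : R) : 0 <= a ->
  parabolic S a c -> exists m : int, forall ij, S ij -> m <= ij.1.
Proof.
move=> a_ge0 hS; set x := `|c| * N%:R.
exists (- (Num.bound x)%:Z) => -[i j] /hS /= Sij.
have le_c : c <= coord i by apply: le_trans Sij; rewrite lerDr mulr_ge0 ?sqr_ge0.
rewrite -(ler_int R) mulrNz; apply: ltW; apply: lt_le_trans (_ : - x <= i%:~R).
  by rewrite ltrN2 archi_boundP // mulr_ge0.
rewrite /coord ler_pdivlMr ?N_gt0R // in le_c.
by apply: le_trans le_c; rewrite /x -mulNr ler_wpM2r // lerNnormlW.
Qed.

Lemma in_RJN_parabolic (f : series R) :
  in_RJN N f <-> exists a c : R, 0 < a /\ parabolic (supp f) a c.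
Proof.
split=> [[_ [a [b [c [a_gt0 hf]]]]] | [a [c [a_gt0 hf]]]].
  exists (a / 2), (c - b ^+ 2 / (2 * a)); split; first by rewrite divr_gt0.
  move=> ij /mem_set /hf; apply: le_trans; exact: sqr_completion.
split; last first.
  by exists a, 0, c; split => // ij /set_mem /hf; rewrite /= mul0r addr0.
split; first exact: parabolic_row_finite a_gt0 hf.
have [m hm] := parabolic_bounded_below (ltW a_gt0) hf.
by exists m => ij /set_mem /hm.
Qed.

Lemma in_RJN_s_zero : in_RJN N (s_zero R).
Proof.
by apply/in_RJN_parabolic; exists 1, 0; split => //; rewrite supp_s_zero.
Qed.

Lemma in_RJN_s_one : in_RJN N (s_one R).
Proof.
apply/in_RJN_parabolic; exists 1, 0; split => //.
by rewrite supp_s_one => _ ->; rewrite /coord !mul0r expr0n /= mulr0 addr0.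
Qed.

Lemma in_RJN_s_opp (f : series R) : in_RJN N f -> in_RJN N (s_opp f).
Proof. by rewrite !in_RJN_parabolic supp_s_opp. Qed.

Lemma in_RJN_s_add (f g : series R) :
  in_RJN N f -> in_RJN N g -> in_RJN N (s_add f g).
Proof.
rewrite !in_RJN_parabolic => -[a1 [c1 [a1_gt0 hf]]] [a2 [c2 [a2_gt0 hg]]].
exists (Num.min a1 a2), (Num.min c1 c2); split; first by rewrite lt_min a1_gt0.
by apply: sub_parabolic (parabolic_setU hf hg); exact: supp_s_add.
Qed.

Lemma in_RJN_s_mul (f g : series R) :
  in_RJN N f -> in_RJN N g -> in_RJN N (s_mul f g).
Proof.
rewrite !in_RJN_parabolic => -[a1 [c1 [a1_gt0 hf]]] [a2 [c2 [a2_gt0 hg]]].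
set a := Num.min a1 a2; have a_gt0 : 0 < a by rewrite lt_min a1_gt0.
exists (a / 2), (c1 + c2); split; first by rewrite divr_gt0.
apply: (sub_parabolic (T := sum_set (supp f) (supp g))); first exact: supp_s_mul.
apply: parabolic_sum_set (ltW a_gt0) _ _.
  by apply: parabolic_le hf; rewrite ?ge_min ?lexx.
by apply: parabolic_le hg; rewrite ?ge_min ?lexx ?orbT.
Qed.

End Parabolic.

Theorem proposition4p3 (R : realType) (N : nat) (hN : (0 < N)%N) :
  (forall f : series R, in_RJN N f -> in_RN f) /\
  in_RJN N (s_zero R) /\
  in_RJN N (s_one R) /\
  (forall f g : series R, in_RJN N f -> in_RJN N g -> in_RJN N (s_add f g)) /\
  (forall f : series R, in_RJN N f -> in_RJN N (s_opp f)) /\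
  (forall f g : series R, in_RJN N f -> in_RJN N g -> in_RJN N (s_mul f g)).
Proof.
split; first by move=> f [].
split; first exact: in_RJN_s_zero.
split; first exact: in_RJN_s_one.
split; first exact: in_RJN_s_add.
split; first exact: in_RJN_s_opp.
exact: in_RJN_s_mul.
Qed.
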